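(* Let $\kappa\ge2$, $n\ge1$ be integers and $0<\epsilon<1$. Let $\check q$ be given by $\check q_i=0$ for $0\le i<2^{\kappa-1}$ and $\check q_i=2^{1-\kappa}$ for $2^{\kappa-1}\le i\le2^\kappa-1$. Let $\mathcal{C}_\rho$ be the set of $q\in\mathbb{R}^{2^\kappa}$ with $q_0=0$, $q_i\ge0$ for all $i$, $\sum_iq_i=1$, and $\sum_{i=1}^{2^\kappa-1}\big(q_i-\tfrac{1}{2^\kappa-1}\big)^2=\frac{2^{\kappa-1}-1}{(2^\kappa-2^{\kappa-1})(2^\kappa-1)}.$ Then $\check q\in\mathcal{C}_\rho$ and $\lambda(n,\epsilon,\check q)\le\lambda(n,\epsilon,q)$ for all $q\in\mathcal{C}_\rho$.
   Context: $W=\mathbb{F}_2^\kappa$; $\nu(i)\in W$ is the binary expansion of $i\in\{0,\dots,2^\kappa-1\}$; vectors $q$ are indexed $q_0,\dots,q_{2^\kappa-1}$. For a subspace $S\subseteq W$, $\zeta(S,q)=\sum_{i:\nu(i)\in S}q_i$; $\Xi(W,\kappa-1)$ is the set of $(\kappa-1)$-dimensional subspaces of $W$. For real $q$ define $\lambda(n,\epsilon,q)=(2-\epsilon)^n2^{-\kappa}\Big(1+\sum_{S\in\Xi(W,\kappa-1)}\big(\tfrac{\epsilon}{2-\epsilon}\big)^{n(1-\zeta(S,q))}\Big)-1$ (the $\chi^2$ divergence between $p_{MZ}$ and $p_Mp_Z$ for the coset code over a binary erasure channel with erasure probability $\epsilon$, when $q$ is a generator matrix's column-distribution vector). The vector $\check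 q$ (the first subspace exclusion code) puts equal weight on all vectors outside the $(\kappa-1)$-dimensional subspace $\{\nu(i):i<2^{\kappa-1}\}$. *)

From HB Require Import structures.
From mathcomp Require Import all_boot all_order all_algebra.
From mathcomp Require Import reals exp.
Set Implicit Arguments. Unset Strict Implicit. Unset Printing Implicit Defensive.
Import Order.TTheory GRing.Theory Num.Theory.
Local Open Scope ring_scope.

Definition W (k : nat) := 'rV['F_2]_k.

Definition nu (k : nat) (i : nat) : W k := \row_(j < k) ((odd (i %/ 2 ^ j))%:R : 'F_2).

(* Subspaces of W are represented canonically by square matrices A with
   <<A>> = A (their row space); Xi(W, k-1) = those of rank (dimension) k-1. *)
Definition Xi (k : nat) : {set 'M['F_2]_k} :=
  [set A : 'M['F_2]_k | (<<A>>%MS == A) && (\rank A == k.-1)].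

Definition zeta (R : realType) (k : nat) (S : 'M['F_2]_k) (q : 'I_(2 ^ k) -> R) : R :=
  \sum_(i < 2 ^ k | (nu k i <= S)%MS) q i.

Definition lambda (R : realType) (k n : nat) (eps : R) (q : 'I_(2 ^ k) -> R) : R :=
  (2 - eps) ^+ n * (2 ^- k)
  * (1 + \sum_(S in Xi k) powR (eps / (2 - eps)) (n%:R * (1 - zeta S q))) - 1.

Definition qcheck (R : realType) (k : nat) : 'I_(2 ^ k) -> R :=
  fun i => if (i < 2 ^ k.-1)%N then 0 else ((2 ^ k.-1)%:R)^-1.

Definition C_rho (R : realType) (k : nat) (q : 'I_(2 ^ k) -> R) : Prop :=
  [/\ (forall i : 'I_(2 ^ k), (i : nat) = 0%N -> q i = 0),
      (forall i : 'I_(2 ^ k), 0 <= q i),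
      \sum_(i < 2 ^ k) q i = 1 &
      \sum_(i < 2 ^ k | (i : nat) != 0%N) (q i - ((2 ^ k)%:R - 1)^-1) ^+ 2
        = ((2 ^ k.-1)%:R - 1) / (((2 ^ k)%:R - (2 ^ k.-1)%:R) * ((2 ^ k)%:R - 1))].

(* Hyperplanes of F_2^k correspond to nonzero vectors c, via H_c = c^perp.
   Since a nonzero vector lies in 2^(k-1) - 1 hyperplanes and two distinct ones
   in 2^(k-2) - 1, the first two moments of the family zeta(H_c, q), c <> 0,
   are determined by sum q and sum q^2, which are the same for every q in
   C_rho. For q-check every zeta(H_c, q-check) is 0 or 1/2. So it suffices that
   among families z >= 0 with prescribed first two moments, sum r^(n (1 - z))
   is smallest for a {0, 1/2}-valued one; this holds because r^(n (1 - z))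
   exceeds a suitable quadratic in z for z >= 0, with equality at z = 0 and
   z = 1/2. *)

From HB Require Import structures.
From mathcomp Require Import all_boot all_order all_algebra.
From mathcomp Require Import reals exp mxabelem.
From mathcomp Require Import classical_sets sequences derive normedtype topology.
From mathcomp Require Import ring lra.
Set Implicit Arguments. Unset Strict Implicit. Unset Printing Implicit Defensive.
Import Order.TTheory GRing.Theory Num.Theory.
Import numFieldNormedType.Exports.
Local Open Scope ring_scope.

Section MeanValue.
Local Open Scope classical_set_scope.
Variables (R : realType) (f df : R -> R).
Hypothesis f_deriv : forall x : R, is_derive x (1 : R) f (df x).

Let f_cont a b : {within `[a, b], continuous f}.
Proof.
exact: derivable_within_continuous (fun (x : R) _ => @ex_derive _ _ _ _ _ _ _ (f_deriv x)).
Qed.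

Lemma deriv_mvt a b : a <= b ->
  exists2 c, a <= c <= b & f b - f a = df c * (b - a).
Proof.
move=> ab; have [c cab ->] := MVT_segment ab (fun x _ => f_deriv x) (@f_cont a b).
by exists c => //; rewrite in_itv in cab.
Qed.

Lemma deriv_rolle a b : a < b -> f a = f b -> exists2 c, a < c < b & df c = 0.
Proof.
move=> ab fab; have [c cab] := MVT ab (fun x _ => f_deriv x) (@f_cont a b).
rewrite fab subrr => /esym/eqP; rewrite mulf_eq0 subr_eq0 (gt_eqF ab) orbF => /eqP.
by exists c => //; rewrite in_itv in cab.
Qed.

Lemma deriv_ge0_le a b : a <= b -> (forall x, a <= x <= b -> 0 <= df x) -> f a <= f b.
Proof.
move=> ab df0; have [c cab fab] := deriv_mvt ab.
by rewrite -subr_ge0 fab mulr_ge0 ?df0 // subr_ge0.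
Qed.

Lemma deriv_le0_ge a b : a <= b -> (forall x, a <= x <= b -> df x <= 0) -> f b <= f a.
Proof.
move=> ab df0; have [c cab fab] := deriv_mvt ab.
by rewrite -subr_le0 fab mulr_le0_ge0 ?df0 // subr_ge0.
Qed.

End MeanValue.

Section ExpQuadGap.
Variable R : realType.

Definition expR_quad_gap (K x : R) := expR x - 1 - x - K * x ^+ 2.

Definition expR_quad_gap1 (K x : R) := expR x - 1 - 2 * K * x.

Lemma is_derive_expR_quad_gap (K x : R) :
  is_derive x 1 (expR_quad_gap K) (expR_quad_gap1 K x).
Proof.
rewrite /expR_quad_gap /expR_quad_gap1; eapply is_derive_eq; first typeclasses eauto.
by rewrite /= ?scaler1 ?mulr1 ?mul1r ?subr0 /GRing.scale /=; ring.
Qed.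

Lemma is_derive_expR_quad_gap1 (K x : R) :
  is_derive x 1 (expR_quad_gap1 K) (expR x - 2 * K).
Proof.
rewrite /expR_quad_gap1; eapply is_derive_eq; first typeclasses eauto.
by rewrite /= ?scaler1 ?mulr1 ?mul1r ?subr0 /GRing.scale /=; ring.
Qed.

(* Rolle's theorem, applied twice between the zeros [-T] and [0] of the gap,
   locates the unique inflection point [d] in [-T, 0]; the gap is nonnegative
   right of [d], and concave left of it. *)
Lemma expR_quad_gap_ge0 (K T x : R) :
  0 < T -> expR_quad_gap K (- T) = 0 -> - T <= x -> 0 <= expR_quad_gap K x.
Proof.
move=> T0 gT xT; set g := expR_quad_gap K; set g1 := expR_quad_gap1 K.
have g0 : g 0 = 0 by rewrite /g /expR_quad_gap expR0; ring.
have g10 : g1 0 = 0 by rewrite /g1 /expR_quad_gap1 expR0; ring.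
have [c /andP[Tc c0] g1c] : exists2 c, - T < c < 0 & g1 c = 0.
  by apply: (deriv_rolle (@is_derive_expR_quad_gap K)); rewrite ?oppr_lt0 ?gT.
have [d /andP[cd d0] Kd] : exists2 d, c < d < 0 & expR d - 2 * K = 0.
  exact: (deriv_rolle (@is_derive_expR_quad_gap1 K)) c0 (etrans g1c (esym g10)).
have {}Kd : 2 * K = expR d by apply/eqP; rewrite eq_sym -subr_eq0 Kd.
have g1_ndecr y z : d <= y -> y <= z -> g1 y <= g1 z.
  move=> dy yz; apply: (deriv_ge0_le (@is_derive_expR_quad_gap1 K)) => // w /andP[yw _].
  by rewrite Kd subr_ge0 ler_expR (le_trans dy).
have g1_nincr y z : y <= z -> z <= d -> g1 z <= g1 y.
  move=> yz zd; apply: (deriv_le0_ge (@is_derive_expR_quad_gap1 K)) => // w /andP[_ wz].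
  by rewrite Kd subr_le0 ler_expR (le_trans wz).
have right_of_d y : d <= y -> 0 <= g y.
  move=> dy; rewrite -g0; have [y0|y0] := leP 0 y.
    apply: (deriv_ge0_le (@is_derive_expR_quad_gap K)) => // w /andP[w0 _].
    by rewrite -g10 g1_ndecr // ltW.
  apply: (deriv_le0_ge (@is_derive_expR_quad_gap K)) (ltW y0) _ => w /andP[yw w0].
  by rewrite -g10 g1_ndecr // (le_trans dy).
have [dx|xd] := leP d x; first exact: right_of_d.
have [g1x|g1x] := leP 0 (g1 x).
  rewrite -gT; apply: (deriv_ge0_le (@is_derive_expR_quad_gap K)) => // w /andP[_ wx].
  by rewrite (le_trans g1x) // g1_nincr // ltW.
apply: le_trans (right_of_d d (lexx d)) _.
apply: (deriv_le0_ge (@is_derive_expR_quad_gap K)) (ltW xd) _ => w /andP[xw wd].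
exact: le_trans (g1_nincr _ _ xw wd) (ltW g1x).
Qed.

End ExpQuadGap.

Section TwoPointMinimizer.
Variable R : realType.

(* Write [r ^ (s (1 - y)) = e^-T e^u] with [u = L y - T], [L = - s ln r] and
   [T = L / 2], and split [e^u] into [1 + u + K u^2] plus the gap. The
   quadratic part sums to the same value for [z] and [z'], and [K] is chosen so
   that the gap vanishes at both [u = -T] and [u = 0], i.e. at [y = 0] and
   [y = 1/2]. *)
Lemma sum_powR_two_point_le (I : finType) (A : {set I}) (r s : R) (z z' : I -> R) :
  0 < r < 1 -> 0 < s ->
  (forall i, i \in A -> 0 <= z i) -> (forall i, i \in A -> z' i = 0 \/ z' i = 2^-1) ->
  \sum_(i in A) z i = \sum_(i in A) z' i ->
  \sum_(i in A) z i ^+ 2 = \sum_(i in A) z' i ^+ 2 ->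
  \sum_(i in A) powR r (s * (1 - z' i)) <= \sum_(i in A) powR r (s * (1 - z i)).
Proof.
move=> /andP[r0 r1] s0 z0 z'01 sum_z sum_z2.
set L := - (s * ln r).
have L0 : 0 < L by rewrite oppr_gt0 pmulr_rlt0 // ln_lt0 // r0 r1.
set T := L / 2; have T0 : 0 < T by rewrite divr_gt0.
set K := (expR (- T) - 1 + T) / T ^+ 2.
have gapT : expR_quad_gap K (- T) = 0.
  by rewrite /expR_quad_gap /K; field; exact: lt0r_neq0.
set e := expR (- T).
have split_powR y : powR r (s * (1 - y)) =
    e * (1 - T + K * T ^+ 2) + e * (L - 2 * K * L * T) * y + e * K * L ^+ 2 * y ^+ 2
    + e * expR_quad_gap K (L * y - T).
  rewrite /powR (gt_eqF r0) /e /expR_quad_gap.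
  have -> : s * (1 - y) * ln r = - T + (L * y - T) by rewrite /T /L; field.
  by rewrite expRD; ring.
under eq_bigr => i _ do rewrite split_powR.
under [X in _ <= X]eq_bigr => i _ do rewrite split_powR.
rewrite !big_split -!mulr_sumr sum_z sum_z2 lerD2l.
have -> : \sum_(i in A) expR_quad_gap K (L * z' i - T) = 0.
  apply: big1 => i /z'01 [->|->]; first by rewrite mulr0 sub0r gapT.
  have -> : L * 2^-1 - T = 0 by rewrite /T; field.
  by rewrite /expR_quad_gap expR0; ring.
rewrite mulr0 mulr_ge0 ?expR_ge0 // sumr_ge0 // => i iA.
apply: expR_quad_gap_ge0 T0 gapT _.
by rewrite lerBrDr addNr mulr_ge0 ?z0 // ltW.
Qed.

End TwoPointMinimizer.

Lemma card_orthogonal (F : finFieldType) k p (A : 'M[F]_(p, k)) :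
  #|[set x : 'rV[F]_k | x *m A^T == 0]| = (#|F| ^ (k - \rank A))%N.
Proof.
have -> : [set x : 'rV[F]_k | x *m A^T == 0] = rowg (kermx A^T).
  by apply/setP => x; rewrite inE mem_rowg sub_kermx.
by rewrite card_rowg mxrank_ker mxrank_tr.
Qed.

Lemma card_orthogonal_nz (F : finFieldType) k p (A : 'M[F]_(p, k)) :
  #|[set x : 'rV[F]_k | (x != 0) && (x *m A^T == 0)]| = (#|F| ^ (k - \rank A)).-1.
Proof.
rewrite -card_orthogonal [in RHS](cardsD1 0) inE mul0mx eqxx /=.
by apply: eq_card => x; rewrite !inE andbC.
Qed.

Lemma mul_tr_eq0C (F : fieldType) k (u v : 'rV[F]_k) : (u *m v^T == 0) = (v *m u^T == 0).
Proof. by rewrite -trmx_eq0 trmx_mul trmxK. Qed.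

Lemma mul_tr_col_mx_eq0 (F : fieldType) k (x u v : 'rV[F]_k) :
  (x *m (col_mx u v)^T == 0) = (x *m u^T == 0) && (x *m v^T == 0).
Proof. by rewrite tr_col_mx mul_mx_row row_mx_eq0. Qed.

Lemma F2_cases (a : 'F_2) : a = 0 \/ a = 1.
Proof. by case: a => [[|[|i]] Hi]; [left|right|]; try apply: val_inj. Qed.

Lemma card_F2 : #|'F_2| = 2%N.
Proof. by rewrite card_Fp. Qed.

Lemma F2_nat_inj (b c : bool) : (b%:R : 'F_2) = c%:R -> b = c.
Proof. by case: b; case: c => //= /eqP; rewrite ?oner_eq0 // eq_sym oner_eq0. Qed.

Lemma rank_col_mx_F2 k (v w : 'rV['F_2]_k) : v != 0 -> w != 0 -> v != w ->
  \rank (col_mx v w) = 2%N.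
Proof.
move=> v0 w0 vw; have := mxrank_sum_cap v w; rewrite addsmxE !rank_rV v0 w0 /=.
suff -> : \rank (v :&: w)%MS = 0%N by rewrite addn0.
apply/eqP; apply: contraNT vw; rewrite -lt0n => vw_nz.
have vw_v : (v :&: w == v)%MS.
  by rewrite -(mxrank_leqif_eq (capmxSl v w)) eqn_leq mxrankS ?capmxSl // rank_rV v0.
have /sub_rVP [a va] : (v <= w)%MS.
  by apply: submx_trans (capmxSr v w); case/andP: vw_v.
case: (F2_cases a) va => -> va; last by rewrite va scale1r.
by move: v0; rewrite va scale0r eqxx.
Qed.

Lemma eq_from_bits k i j : (i < 2 ^ k)%N -> (j < 2 ^ k)%N ->
  (forall t, (t < k)%N -> odd (i %/ 2 ^ t) = odd (j %/ 2 ^ t)) -> i = j.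
Proof.
elim: k i j => [|k IH] i j; first by rewrite expn0 !ltnS !leqn0 => /eqP-> /eqP->.
move=> ik jk bits; have odd_ij : odd i = odd j by have := bits 0%N isT; rewrite !divn1.
have half_ij : i./2 = j./2.
  apply: IH; rewrite -?divn2 ?ltn_divLR -?expnSr // => t tk.
  by rewrite -!divnMA -expnS; exact: bits.
by rewrite -[i]odd_double_half -[j]odd_double_half odd_ij half_ij.
Qed.

Lemma nu_eq k i j : (i < 2 ^ k)%N -> (j < 2 ^ k)%N -> nu k i = nu k j -> i = j.
Proof.
move=> ik jk /rowP nu_ij; apply: eq_from_bits ik jk _ => t tk.
by have := nu_ij (Ordinal tk); rewrite !mxE; exact: F2_nat_inj.
Qed.

Lemma nu_bij k : bijective (fun i : 'I_(2 ^ k) => nu k i).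
Proof.
apply: inj_card_bij; first by move=> i j /nu_eq nu_ij; apply/val_inj/nu_ij.
by rewrite card_mx card_F2 mul1n card_ord.
Qed.

Lemma card_nu_pred k (P : pred 'rV['F_2]_k) :
  #|[set i : 'I_(2 ^ k) | P (nu k i)]| = #|[set x | P x]|.
Proof.
rewrite -(on_card_preimset (onW_bij _ (nu_bij k))).
by apply: eq_card => i; rewrite !inE.
Qed.

Lemma nu_eq0 k (i : 'I_(2 ^ k)) : (nu k i == 0) = ((i : nat) == 0%N).
Proof.
have nu0 : nu k 0 = 0 by apply/rowP => j; rewrite !mxE div0n.
by apply/eqP/eqP => [|->] //; rewrite -nu0; apply: nu_eq; rewrite ?expn_gt0.
Qed.

Lemma nu_last m (i : 'I_(2 ^ m.+1)) : nu m.+1 i 0 ord_max = ((2 ^ m <= i)%N)%:R.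
Proof.
rewrite mxE /=; congr (_%:R).
have ilt : (i < 2 ^ m + 2 ^ m)%N by rewrite addnn -mul2n -expnS.
case: (leqP (2 ^ m) i) => im; last by rewrite divn_small.
by rewrite -(subnKC im) divnDl ?dvdnn // divnn expn_gt0 divn_small ?ltn_subLR.
Qed.

Definition hyperplane k (c : 'rV['F_2]_k) : 'M['F_2]_k := <<kermx c^T>>%MS.

Lemma sub_hyperplane k (c u : 'rV['F_2]_k) : (u <= hyperplane c)%MS = (u *m c^T == 0).
Proof. by rewrite genmxE sub_kermx. Qed.

Lemma mx11_eq0 (F : nzRingType) (A : 'M[F]_1) : (A == 0) = (A 0 0 == 0).
Proof.
apply/eqP/eqP => [->|A0]; first by rewrite mxE.
by apply/matrixP => i j; rewrite !ord1 A0 mxE.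
Qed.

Lemma hyperplane_inj k : injective (@hyperplane k).
Proof.
move=> c d cd; apply/rowP => j.
have := sub_hyperplane c (delta_mx 0 j); rewrite cd sub_hyperplane -!rowE.
rewrite !mx11_eq0 !mxE.
by case: (F2_cases (c 0 j)) => ->; case: (F2_cases (d 0 j)) => -> //=; rewrite eqxx oner_eq0.
Qed.

Lemma Xi_hyperplanes k : (0 < k)%N -> Xi k = @hyperplane k @: [set c : 'rV['F_2]_k | c != 0].
Proof.
move=> k0; apply/setP => S; rewrite inE; apply/andP/imsetP => [[/eqP genS /eqP rkS]|].
  have ker_rank : \rank (kermx S^T) = 1%N.
    by rewrite mxrank_ker mxrank_tr rkS -{1}(prednK k0) subSnn.
  set c := nz_row (kermx S^T).
  have c0 : c != 0 by rewrite nz_row_eq0 -mxrank_eq0 ker_rank.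
  exists c; rewrite ?inE //.
  have S_c : (S <= kermx c^T)%MS.
    rewrite sub_kermx -trmx_eq0 trmx_mul trmxK -sub_kermx; exact: nz_row_sub.
  rewrite /hyperplane -genS; apply/eq_genmx/eqmxP.
  by rewrite -(mxrank_leqif_eq S_c) mxrank_ker mxrank_tr rank_rV c0 rkS subn1.
case=> c; rewrite inE => c0 ->.
by rewrite /hyperplane genmx_id eqxx genmxE mxrank_ker mxrank_tr rank_rV c0 subn1.
Qed.

Lemma card_nz_orth_nu k (i : 'I_(2 ^ k)) : (i : nat) != 0%N ->
  #|[set c : 'rV['F_2]_k | (c != 0) && (nu k i *m c^T == 0)]| = (2 ^ (k - 1)).-1.
Proof.
move=> i0; have rk1 : \rank (nu k i) = 1%N by rewrite rank_rV nu_eq0 i0.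
have := card_orthogonal_nz (nu k i); rewrite card_F2 rk1 => <-.
by apply: eq_card => c; rewrite !inE mul_tr_eq0C.
Qed.

Lemma card_nz_orth_nu2 k (i j : 'I_(2 ^ k)) :
  (i : nat) != 0%N -> (j : nat) != 0%N -> i != j ->
  #|[set c : 'rV['F_2]_k | (c != 0) && ((nu k i *m c^T == 0) && (nu k j *m c^T == 0))]|
  = (2 ^ (k - 2)).-1.
Proof.
move=> i0 j0 ij; have rk2 : \rank (col_mx (nu k i) (nu k j)) = 2%N.
  apply: rank_col_mx_F2; rewrite ?nu_eq0 //.
  by apply: contra ij => /eqP /nu_eq nu_ij; apply/eqP/val_inj/nu_ij.
have := card_orthogonal_nz (col_mx (nu k i) (nu k j)); rewrite card_F2 rk2 => <-.
by apply: eq_card => c; rewrite !inE mul_tr_col_mx_eq0 !(mul_tr_eq0C c).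
Qed.

Lemma sumr_cond_const (R : nmodType) (I : finType) (P : pred I) (x : R) :
  \sum_(i | P i) x = x *+ #|[set i | P i]|.
Proof. by rewrite -sumr_const; apply: eq_bigl => i; rewrite inE. Qed.

Lemma sum_pairs_diag (R : comPzRingType) (I : finType) (q : I -> R) (a b : R) :
  \sum_i \sum_j q i * q j * (if i == j then a else b)
  = (a - b) * \sum_i q i ^+ 2 + b * (\sum_i q i) ^+ 2.
Proof.
rewrite expr2 big_distrlr /= !mulr_sumr -big_split /=; apply: eq_bigr => i _.
rewrite (bigD1 i) //= eqxx [X in _ = _ + _ * X](bigD1 i) //=.
rewrite (eq_bigr (fun j => q i * q j * b)); last first.
  by move=> j /negPf; rewrite eq_sym => ->.
by rewrite -mulr_suml; ring.
Qed.

Lemma zeta_hyperplane (R : realType) k (q : 'I_(2 ^ k) -> R) (c : 'rV['F_2]_k) :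
  zeta (hyperplane c) q = \sum_(i < 2 ^ k | nu k i *m c^T == 0) q i.
Proof. by apply: eq_bigl => i; rewrite sub_hyperplane. Qed.

Section HyperplaneSums.
Variables (R : realType) (k : nat) (q : 'I_(2 ^ k) -> R).
Hypothesis q0 : forall i : 'I_(2 ^ k), (i : nat) = 0%N -> q i = 0.

Lemma sum_zeta_hyperplanes :
  \sum_(c in [set c : 'rV['F_2]_k | c != 0]) zeta (hyperplane c) q
  = ((2 ^ (k - 1)).-1)%:R * \sum_i q i.
Proof.
under eq_bigr => c _ do rewrite zeta_hyperplane big_mkcond.
rewrite exchange_big mulr_sumr; apply: eq_bigr => i _ /=.
rewrite -big_mkcondr sumr_cond_const.
have [i0|i0] := eqVneq (i : nat) 0%N; first by rewrite q0 // mul0rn mulr0.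
by rewrite mulr_natl -(card_nz_orth_nu i0); congr (_ *+ _); apply: eq_card => c; rewrite !inE.
Qed.

Lemma sum_zeta_hyperplanes_sqr :
  \sum_(c in [set c : 'rV['F_2]_k | c != 0]) zeta (hyperplane c) q ^+ 2
  = (((2 ^ (k - 1)).-1)%:R - ((2 ^ (k - 2)).-1)%:R) * \sum_i q i ^+ 2
    + ((2 ^ (k - 2)).-1)%:R * (\sum_i q i) ^+ 2.
Proof.
rewrite -sum_pairs_diag.
pose orth (c : 'rV['F_2]_k) (i : 'I_(2 ^ k)) := nu k i *m c^T == 0.
have sqr_as_pairs c : zeta (hyperplane c) q ^+ 2
    = \sum_i \sum_j (if orth c i then q i else 0) * (if orth c j then q j else 0).
  by rewrite zeta_hyperplane big_mkcond expr2 big_distrlr.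
rewrite (eq_bigr _ (fun c _ => sqr_as_pairs c)) exchange_big /=.
apply: eq_bigr => i _; rewrite exchange_big /=; apply: eq_bigr => j _.
rewrite (eq_bigr (fun c => if orth c i && orth c j then q i * q j else 0)); last first.
  by move=> c _; case: (orth c i); case: (orth c j); rewrite ?mulr0 ?mul0r.
rewrite -big_mkcondr sumr_cond_const.
have [i0|i0] := eqVneq (i : nat) 0%N; first by rewrite q0 // !mul0r mul0rn.
have [j0|j0] := eqVneq (j : nat) 0%N; first by rewrite (q0 j0) !mulr0 !mul0r mul0rn.
rewrite -[LHS]mulr_natr; congr (_ * _); case: eqVneq => [<-|ij].
  by rewrite -(card_nz_orth_nu i0); apply/congr1/eq_card => c; rewrite !inE andbb.
by rewrite -(card_nz_orth_nu2 i0 j0 ij); apply/congr1/eq_card => c; rewrite !inE.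
Qed.

End HyperplaneSums.

Lemma F2_nat_eq0 (b : bool) : ((b%:R : 'F_2) == 0) = ~~ b.
Proof. by case: b; rewrite ?eqxx ?oner_eq0. Qed.

Lemma orth_delta_last m (x : 'rV['F_2]_m.+1) :
  (x *m (delta_mx 0 ord_max : 'rV['F_2]_m.+1)^T == 0) = (x 0 ord_max == 0).
Proof. by rewrite trmx_delta -colE mx11_eq0 mxE. Qed.

Lemma card_orth_last_nz m (c : 'rV['F_2]_m.+1) : (0 < m)%N ->
  c != 0 -> c != delta_mx 0 ord_max ->
  #|[set x : 'rV['F_2]_m.+1 | (x *m c^T == 0) && (x 0 ord_max != 0)]| = (2 ^ m.-1)%N.
Proof.
move=> m0 c0 ce; set e : 'rV['F_2]_m.+1 := delta_mx 0 ord_max.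
have e0 : e != 0 by rewrite -mxrank_eq0 mxrank_delta.
pose orth (A : 'M['F_2]_(_, m.+1)) := [set x : 'rV['F_2]_m.+1 | x *m A^T == 0].
have := cardsID (orth _ e) (orth _ c).
have -> : orth _ c :&: orth _ e = orth _ (col_mx c e).
  by apply/setP => x; rewrite !inE mul_tr_col_mx_eq0.
have -> : orth _ c :\: orth _ e = [set x | (x *m c^T == 0) && (x 0 ord_max != 0)].
  by apply/setP => x; rewrite !inE orth_delta_last andbC.
rewrite !card_orthogonal card_F2 rank_col_mx_F2 // rank_rV c0 subn1 subn2 /=.
have -> : (2 ^ m = 2 ^ m.-1 + 2 ^ m.-1)%N by rewrite addnn -mul2n -expnS prednK.
by move=> /eqP; rewrite eqn_add2l => /eqP.
Qed.

Section SubspaceExclusionCode.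
Variables (R : realType) (m : nat).
Hypothesis m0 : (0 < m)%N.

Lemma zeta_hyperplane_qcheck (c : 'rV['F_2]_m.+1) : c != 0 ->
  zeta (hyperplane c) (@qcheck R m.+1) = 0 \/ zeta (hyperplane c) (@qcheck R m.+1) = 2^-1.
Proof.
move=> c0; rewrite zeta_hyperplane /qcheck /=.
rewrite (eq_bigr (fun i : 'I_(2 ^ m.+1) => if (2 ^ m <= i)%N then (2 ^ m)%:R^-1 else 0));
  last by move=> i _; case: leqP.
rewrite -big_mkcondr sumr_cond_const.
pose P (x : 'rV['F_2]_m.+1) := (x *m c^T == 0) && (x 0 ord_max != 0).
have -> : #|[set i : 'I_(2 ^ m.+1) | (nu m.+1 i *m c^T == 0) && (2 ^ m <= i)%N]|
    = #|[set x | P x]|.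
  by rewrite -card_nu_pred; apply: eq_card => i; rewrite !inE /P nu_last F2_nat_eq0 negbK.
have [ce|ce] := eqVneq c (delta_mx 0 ord_max).
  left; apply/eqP; rewrite mulrn_eq0 cards_eq0; apply/orP; left; apply/eqP/setP => x.
  by rewrite !inE /P ce orth_delta_last; case: eqP.
right; rewrite card_orth_last_nz //.
have -> : (2 ^ m)%:R = 2 * (2 ^ m.-1)%:R :> R by rewrite -natrM -expnS prednK.
by rewrite invfM -[LHS]mulr_natr -mulrA mulVf ?mulr1 // pnatr_eq0 expn_eq0.
Qed.

Lemma sum_ord_exp2S (F : nat -> R) :
  \sum_(i < 2 ^ m.+1) F i = \sum_(0 <= i < 2 ^ m) F i + \sum_(2 ^ m <= i < 2 ^ m + 2 ^ m) F i.
Proof. by rewrite -big_cat_nat ?leq_addr // addnn -mul2n -expnS big_mkord. Qed.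

Lemma qcheck_C_rho : C_rho (@qcheck R m.+1).
Proof.
set h := (2 ^ m)%N; have h1 : (1 <= h)%N by rewrite expn_gt0.
have h0 : h%:R != 0 :> R by rewrite pnatr_eq0 -lt0n.
have h2 : 2 <= h%:R :> R by rewrite (ler_nat R 2) -(expn1 2) leq_exp2l.
pose F (i : nat) : R := if (i < h)%N then 0 else h%:R^-1.
have F_lo i : (i < h)%N -> F i = 0 by rewrite /F => ->.
have F_hi i : (h <= i)%N -> F i = h%:R^-1 by rewrite /F ltnNge => ->.
split.
- by move=> i i0; rewrite /qcheck /= i0 expn_gt0.
- by move=> i; rewrite /qcheck; case: ifP; rewrite ?invr_ge0 ?ler0n.
- rewrite (sum_ord_exp2S F) big1_seq ?add0r; last first.
    by move=> i; rewrite mem_index_iota => /andP[_ /F_lo].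
  rewrite (eq_big_nat _ _ (F2 := fun => h%:R^-1)) => [|i /andP[/F_hi]] //.
  by rewrite sumr_const_nat addnK -[LHS]mulr_natr mulVf.
set d := ((2 ^ m.+1)%:R - 1 : R)^-1.
rewrite big_mkcond /= (sum_ord_exp2S (fun i => if i != 0%N then (F i - d) ^+ 2 else 0)).
rewrite big_ltn //= add0r.
rewrite (@eq_big_nat _ _ _ 1 h _ (fun => d ^+ 2)) => [|i /andP[i1 ih]]; last first.
  by rewrite -lt0n i1 F_lo // sub0r sqrrN.
rewrite (@eq_big_nat _ _ _ h _ _ (fun => (h%:R^-1 - d) ^+ 2)) => [|i /andP[hi _]];
  last by rewrite -lt0n (leq_trans h1 hi) F_hi.
rewrite !sumr_const_nat addnK -[d ^+ 2 *+ _]mulr_natr -[(_ - d) ^+ 2 *+ _]mulr_natr.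
rewrite natrB // /d expnS -/h mul2n -addnn natrD.
by field; rewrite addrK h0 andbT; apply/eqP; lra.
Qed.

End SubspaceExclusionCode.

Section ConstraintSet.
Variables (R : realType) (k : nat).

Lemma sum_nz_ord (F : 'I_(2 ^ k) -> R) :
  (forall i : 'I_(2 ^ k), (i : nat) = 0%N -> F i = 0) ->
  \sum_(i < 2 ^ k | (i : nat) != 0%N) F i = \sum_i F i.
Proof.
move=> F0; rewrite [RHS](bigID (fun i : 'I_(2 ^ k) => (i : nat) != 0%N)) /=.
by rewrite [X in _ + X]big1 ?addr0 // => i /negbNE/eqP/F0.
Qed.

Lemma sum_nz_sqr_sub (q : 'I_(2 ^ k) -> R) (d : R) :
  (forall i : 'I_(2 ^ k), (i : nat) = 0%N -> q i = 0) ->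
  \sum_(i < 2 ^ k | (i : nat) != 0%N) (q i - d) ^+ 2
  = \sum_i q i ^+ 2 - 2 * d * \sum_i q i + \sum_(i < 2 ^ k | (i : nat) != 0%N) d ^+ 2.
Proof.
move=> q0; rewrite -(sum_nz_ord q0) -sum_nz_ord => [|i /q0 ->]; last by rewrite expr0n.
by rewrite mulr_sumr -sumrB -big_split; apply: eq_bigr => i _ /=; ring.
Qed.

Lemma C_rho_sum_sqr (q q' : 'I_(2 ^ k) -> R) : C_rho q -> C_rho q' ->
  \sum_i q i ^+ 2 = \sum_i q' i ^+ 2.
Proof.
case=> q0 _ sum_q var_q [q'0 _ sum_q' var_q'].
have := sum_nz_sqr_sub ((2 ^ k)%:R - 1)^-1 q0.
have := sum_nz_sqr_sub ((2 ^ k)%:R - 1)^-1 q'0.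
by rewrite var_q var_q' sum_q sum_q' => -> ?; lra.
Qed.

End ConstraintSet.

Theorem theorem8 (R : realType) (k n : nat) (eps : R) :
  (2 <= k)%N -> (1 <= n)%N -> 0 < eps -> eps < 1 ->
  C_rho (@qcheck R k) /\
  (forall q : 'I_(2 ^ k) -> R, C_rho q -> lambda n eps (@qcheck R k) <= lambda n eps q).
Proof.
case: k => [|m] // m_gt0 n_gt0 eps_gt0 eps_lt1; have qcheckC := qcheck_C_rho R m_gt0.
split => // q qC; rewrite /lambda lerD2r ler_wpM2l //.
  by apply: mulr_ge0; [apply: exprn_ge0; lra | rewrite invr_ge0 exprn_ge0].
rewrite lerD2l (Xi_hyperplanes (ltn0Sn m)).
rewrite !big_imset; try exact: in2W (@hyperplane_inj _).
have [q0 q_ge0 sum_q _] := qC; have [qcheck0 _ sum_qcheck _] := qcheckC.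
apply: sum_powR_two_point_le.
- by rewrite divr_gt0 ?subr_gt0 ?ltr_pdivrMr ?subr_gt0 ?mul1r; lra.
- by rewrite ltr0n.
- by move=> c _; apply: sumr_ge0 => i _; exact: q_ge0.
- by move=> c; rewrite inE; exact: zeta_hyperplane_qcheck.
- by rewrite (sum_zeta_hyperplanes q0) (sum_zeta_hyperplanes qcheck0) sum_q sum_qcheck.
- rewrite (sum_zeta_hyperplanes_sqr q0) (sum_zeta_hyperplanes_sqr qcheck0).
  by rewrite sum_q sum_qcheck (C_rho_sum_sqr qC qcheckC).
Qed.
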